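(* Let $G$ be a vector group over $\Phi$ and $K$ a commutative associative unital $\Phi$-algebra. Then there exists a surjective homomorphism $\mathrm{Lie}(G)\otimes_\Phi K\to\mathrm{Lie}(\hat G_K)$.
   Context: $\Phi$ is a commutative unital ring. Given $\Phi$-modules $A,B$ and a $\Phi$-bilinear $\psi : A\times A\to B$, make $A\times B$ a group via $(a,b)(c,d) = (a+c,\, b+d+\psi(a,c))$, with scalar multiplications $\lambda\cdot_1(a,b) = (\lambda a,\lambda^2 b)$ and, only on $0\times B$, $\lambda\cdot_2(0,b) = (0,\lambda b)$; the same formulas with $\psi$ extended $K$-bilinearly make sense on $(A\otimes K)\times(B\otimes K)$ for a commutative associative unital $\Phi$-algebra $K$, $\lambda\in K$. A subgroup $G\le A\times B$ is an almost vector group if it is closed under $\lambda\cdot_1$ ($\lambda\in\Phi$) and $G_2:=G\cap(0\times B)$ is closed under $\lambda\cdot_2$ ($\lambda\in\Phi$). $\hat G(K)$ is the smallest subgroup of $(A\otimes K)\times(B\otimes K)$ containing the images of all $g\in G$, closed under $\lambda\cdot_1$ ($\lambda\in K$), whose intersection $\hat G(K)_2$ with $0\times(B\otimes K)$ is closed under $\lambda\cdot_2$ ($\lambda\in K$). A vector group is an almost vector group such that, if $1/2\notin\Phi$, the natural map $G_2\otimes_\Phi K\to\hat G(K)_2$ is surjective for all $K$. For a vector group $G$ over $\Phi$, $\hat G(K)$ is a vector group over $K$ (inside $(A\otimes K)\times(B\otimes K)$); $\hat G_K$ denotes the functor on commutative associative unital $K$-algebras $M\mapsto \widehat{\hat G(K)}(M)$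 associated to it. For a vector group $H$ over a ring $R$, $\mathrm{Lie}(H)$ is the kernel of the map $\hat H(R[\epsilon])\to\hat H(R)$ induced by $\epsilon\mapsto 0$ on the dual numbers $R[\epsilon]$ ($\epsilon^2=0$), i.e. the elements of the form $(\epsilon a,\epsilon b)$, an $R$-module; $\mathrm{Lie}(\hat G_K)$ is this construction applied to $\hat G(K)$ over $R=K$. *)

From HB Require Import structures.
From mathcomp Require Import all_boot all_algebra.
From Stdlib Require Import IndefiniteDescription.
Set Implicit Arguments. Unset Strict Implicit. Unset Printing Implicit Defensive.
Import GRing.Theory.
Local Open Scope ring_scope.

Record rmod (Sc : Type) := RMod {
  rcar :> Type;
  rzero : rcar;
  radd : rcar -> rcar -> rcar;
  ropp : rcar -> rcar;
  rscale : Sc -> rcar -> rcar }.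

Record ralg (R : Type) := RAlg {
  acar :> Type;
  azero : acar;
  aone : acar;
  aadd : acar -> acar -> acar;
  aopp : acar -> acar;
  amul : acar -> acar -> acar;
  ascale : R -> acar -> acar }.

Arguments rzero {Sc} r. Arguments radd {Sc} r _ _. Arguments ropp {Sc} r _.
Arguments rscale {Sc} r _ _.
Arguments azero {R} r. Arguments aone {R} r. Arguments aadd {R} r _ _.
Arguments aopp {R} r _. Arguments amul {R} r _ _. Arguments ascale {R} r _ _.

Definition rmod_of (R : pzRingType) (V : lmodType R) : rmod R :=
  @RMod R V 0 +%R (@GRing.opp V) (fun r v => r *: v).

Definition ralg_of (R : comPzRingType) (K : comAlgType R) : ralg R :=
  @RAlg R K 0 1 +%R (@GRing.opp K) *%R (fun r k => r *: k).

Definition ralg_self (R : comPzRingType) : ralg R :=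
  @RAlg R R 0 1 +%R (@GRing.opp R) *%R *%R.

(* dual numbers R[eps] = R + R eps, eps^2 = 0, represented as pairs (x, y) = x + y eps *)
Definition dual (R : comPzRingType) : ralg R :=
  @RAlg R (R * R)%type (0, 0) (1, 0)
    (fun x y => (x.1 + y.1, x.2 + y.2)) (fun x => (- x.1, - x.2))
    (fun x y => (x.1 * y.1, x.1 * y.2 + x.2 * y.1))
    (fun r x => (r * x.1, r * x.2)).

(* the algebra map R[eps] -> R, eps |-> 0 *)
Definition eps0 (R : comPzRingType) (x : acar (dual R)) : acar (ralg_self R) := x.1.

(* U is a submodule of the module V, given through an injection iota
   (iota = id for the full module).  An element of U (x)_R S is the class
   of a formal sum  sum_i u_i (x) s_i  (a list), two lists being identified
   iff every R-bilinear map into every R-module takes the same value on them. *)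
Section Tensor.
Variables (R : comPzRingType) (V : rmod R) (U : Type) (iota : U -> V) (S : ralg R).

Definition tbilin (M : lmodType R) (f : U -> S -> M) : Prop :=
  [/\ (forall u u' u'' s, iota u'' = radd V (iota u) (iota u') ->
          f u'' s = f u s + f u' s),
      (forall r u u' s, iota u' = rscale V r (iota u) -> f u' s = r *: f u s),
      (forall u s s', f u (aadd S s s') = f u s + f u s') &
      (forall r u s, f u (ascale S r s) = r *: f u s)].

Definition teqv (l1 l2 : seq (U * S)) : Prop :=
  forall (M : lmodType R) (f : U -> S -> M), tbilin f ->
    \sum_(p <- l1) f p.1 p.2 = \sum_(p <- l2) f p.1 p.2.

Record tens := Tens { tcl : seq (U * S) -> Prop; tclP : exists l, tcl = teqv l }.

Definition tcls (l : seq (U * S)) : tens := @Tens (teqv l) (ex_intro _ l erefl).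
Definition trep (x : tens) : seq (U * S) :=
  proj1_sig (constructive_indefinite_description _ (tclP x)).

Definition tzero : tens := tcls [::].
Definition tadd (x y : tens) : tens := tcls (trep x ++ trep y).
Definition topp (x : tens) : tens := tcls [seq (p.1, aopp S p.2) | p <- trep x].
Definition tscaleS (s : S) (x : tens) : tens :=
  tcls [seq (p.1, amul S s p.2) | p <- trep x].
Definition tscaleR (r : R) (x : tens) : tens :=
  tcls [seq (p.1, ascale S r p.2) | p <- trep x].

Definition trmod : rmod S := @RMod S tens tzero tadd topp tscaleS.
Definition trmodR : rmod R := @RMod R tens tzero tadd topp tscaleR.
End Tensor.

Definition T (R : comPzRingType) (V : rmod R) (S : ralg R) := tens (@id V) S.
Definition tmod (R : comPzRingType) (V : rmod R) (S : ralg R) : rmod S :=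
  trmod (@id V) S.

Definition psiS (R : comPzRingType) (V W : rmod R) (psi : V -> V -> W) (S : ralg R)
  (x y : T V S) : T W S :=
  tcls (@id W) [seq (psi p.1 q.1, amul S p.2 q.2) | p <- trep x, q <- trep y].

Definition tpush (R : comPzRingType) (V : rmod R) (S S' : ralg R) (f : S -> S')
  (x : T V S) : T V S' :=
  tcls (@id V) [seq (p.1, f p.2) | p <- trep x].

Section Group.
Variables (Sc : Type) (V W : rmod Sc) (psi : V -> V -> W).

Definition gone : V * W := (rzero V, rzero W).
Definition gmul (x y : V * W) : V * W :=
  (radd V x.1 y.1, radd W (radd W x.2 y.2) (psi x.1 y.1)).
Definition ginv (x : V * W) : V * W :=
  (ropp V x.1, radd W (ropp W x.2) (psi x.1 x.1)).

Definition is_subgroup (H : V * W -> Prop) : Prop :=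
  [/\ H gone, (forall x y, H x -> H y -> H (gmul x y)) & (forall x, H x -> H (ginv x))].

Definition closed_sc1 (H : V * W -> Prop) : Prop :=
  forall (l : Sc) x, H x -> H (rscale V l x.1, rscale W l (rscale W l x.2)).
Definition closed_sc2 (H : V * W -> Prop) : Prop :=
  forall (l : Sc) b, H (rzero V, b) -> H (rzero V, rscale W l b).

Definition almost_vector_group (H : V * W -> Prop) : Prop :=
  [/\ is_subgroup H, closed_sc1 H & closed_sc2 H].
End Group.

Definition hat (R : comPzRingType) (V W : rmod R) (psi : V -> V -> W)
  (G : V * W -> Prop) (S : ralg R) (x : T V S * T W S) : Prop :=
  forall H : T V S * T W S -> Prop,
    (forall g, G g -> H (tcls (@id V) [:: (g.1, aone S)], tcls (@id W) [:: (g.2, aone S)])) ->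
    @almost_vector_group S (tmod V S) (tmod W S) (@psiS R V W psi S) H ->
    H x.

Definition Lie (R : comPzRingType) (V W : rmod R) (psi : V -> V -> W)
  (G : V * W -> Prop) (x : T V (dual R) * T W (dual R)) : Prop :=
  @hat R V W psi G (dual R) x /\
  (tpush (@eps0 R) x.1, tpush (@eps0 R) x.2) =
    (tzero (@id V) (ralg_self R), tzero (@id W) (ralg_self R)).

Definition lie_rmod (R : comPzRingType) (V W : rmod R) : rmod R :=
  @RMod R (T V (dual R) * T W (dual R))%type
    (tzero (@id V) (dual R), tzero (@id W) (dual R))
    (fun x y => (tadd x.1 y.1, tadd x.2 y.2))
    (fun x => (topp x.1, topp x.2))
    (fun r x => (tscaleR r x.1, tscaleR r x.2)).

Definition bilinear_map (Phi : comPzRingType) (A B : lmodType Phi) (psi : A -> A -> B) :=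
  (forall a r c c', psi a (r *: c + c') = r *: psi a c + psi a c') /\
  (forall c r a a', psi (r *: a + a') c = r *: psi a c + psi a' c).

(* vector group: almost vector group such that, if 1/2 is not in Phi, the
   natural map G_2 (x) K -> \hat G(K)_2 is onto for all K; its image is the
   set of classes of sums  sum_i b_i (x) k_i  with (0,b_i) in G. *)
Definition vector_group (Phi : comPzRingType) (A B : lmodType Phi) (psi : A -> A -> B)
  (G : A * B -> Prop) : Prop :=
  @almost_vector_group Phi (rmod_of A) (rmod_of B) psi G /\
  ((~ exists h : Phi, h * 2 = 1) ->
   forall (K : comAlgType Phi) (y : T (rmod_of B) (ralg_of K)),
     @hat Phi (rmod_of A) (rmod_of B) psi G (ralg_of K)
         (tzero (@id (rmod_of A)) (ralg_of K), y) ->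
     exists l : seq (B * K),
       (forall p, List.In p l -> G (0, p.1)) /\ y = @tcls Phi (rmod_of B) _ id (ralg_of K) l).

Definition LieG (Phi : comPzRingType) (A B : lmodType Phi) (psi : A -> A -> B)
  (G : A * B -> Prop) := Lie (V := rmod_of A) (W := rmod_of B) psi G.

Definition LieG_tensor (Phi : comPzRingType) (A B : lmodType Phi) (psi : A -> A -> B)
  (G : A * B -> Prop) (K : comAlgType Phi) : Type :=
  tens (V := lie_rmod (rmod_of A) (rmod_of B))
       (fun x : {x | LieG psi G x} => proj1_sig x) (ralg_of K).

Definition GK_A (Phi : comPzRingType) (A : lmodType Phi) (K : comAlgType Phi) : rmod K :=
  tmod (rmod_of A) (ralg_of K).

Definition LieGK_rmod (Phi : comPzRingType) (A B : lmodType Phi) (K : comAlgType Phi)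
  : rmod K := lie_rmod (GK_A A K) (GK_A B K).

Definition LieGK (Phi : comPzRingType) (A B : lmodType Phi) (psi : A -> A -> B)
  (G : A * B -> Prop) (K : comAlgType Phi) : LieGK_rmod A B K -> Prop :=
  Lie (R := K) (V := GK_A A K) (W := GK_A B K)
      (@psiS Phi (rmod_of A) (rmod_of B) psi (ralg_of K))
      (@hat Phi (rmod_of A) (rmod_of B) psi G (ralg_of K)).

Arguments LieG_tensor {Phi A B} psi G K.
Arguments LieGK_rmod {Phi} A B K.
Arguments LieGK {Phi A B} psi G K _.
Arguments vector_group {Phi A B} psi G.
Arguments bilinear_map {Phi A B} psi.

(* Over the dual numbers, V (x) R[eps] is V x V, so hat G(R[eps]) can be
   computed in coordinates.  By minimality of hat G, its elements are
   (a + eps u, b + eps (v + psi a u)) with (a, b) in G and (u, v) in the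
   R-span S of the pairs (a, 2b - psi a a) for (a, b) in G and (0, b) for
   (0, b) in G; conversely every (eps u, eps v) with (u, v) in S lies in
   hat G(R[eps]).  Hence Lie(G) = {(eps u, eps v) | (u, v) in S}, and
   (eps u, eps v) (x) k |-> (eps (u (x) k), eps (v (x) k)) is a K-linear map
   into Lie(hat G_K).  The same description of Lie(hat G_K), now with the image
   of this map in the role of S, shows that it is onto; the only delicate point
   is that (0, k b) must be in the image whenever (0, b) is in hat G(K), which
   is where the vector group hypothesis is used when 2 is not invertible. *)

From HB Require Import structures.
From mathcomp Require Import all_boot all_algebra.
From mathcomp Require Import boolp.
From mathcomp Require Import ring.
From Stdlib Require Import ProofIrrelevance.
Set Implicit Arguments. Unset Strict Implicit. Unset Printing Implicit Defensive.
Import GRing.Theory.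
Local Open Scope ring_scope.

Section TensorClasses.
Variables (R : comPzRingType) (V : rmod R) (U : Type) (iota : U -> V) (S : ralg R).
Implicit Types (l : seq (U * S)) (x y : tens iota S).

Lemma teqv_refl l : teqv iota l l.
Proof. by move=> M f _. Qed.

Lemma teqv_sym l1 l2 : teqv iota l1 l2 -> teqv iota l2 l1.
Proof. by move=> h M f hf; rewrite (h M f hf). Qed.

Lemma teqv_trans l1 l2 l3 : teqv iota l1 l2 -> teqv iota l2 l3 -> teqv iota l1 l3.
Proof. by move=> h1 h2 M f hf; rewrite (h1 M f hf) (h2 M f hf). Qed.

Lemma tcls_eq l1 l2 : teqv iota l1 l2 -> tcls iota l1 = tcls iota l2.
Proof.
move=> h; rewrite /tcls.
have E : teqv iota l1 = teqv iota l2.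
  apply: funext => l; apply: propext; split => h'.
  - exact: teqv_trans (teqv_sym h) h'.
  - exact: teqv_trans h h'.
move: (ex_intro _ l1 _) (ex_intro _ l2 _); rewrite E => p1 p2.
by rewrite (proof_irrelevance _ p1 p2).
Qed.

Lemma tcls_inj l1 l2 : tcls iota l1 = tcls iota l2 -> teqv iota l1 l2.
Proof. by move=> /(f_equal (@tcl _ _ _ _ _)) /= ->; apply: teqv_refl. Qed.

Lemma tcl_trep x : tcl x = teqv iota (trep x).
Proof.
by rewrite /trep; case: (IndefiniteDescription.constructive_indefinite_description _ _).
Qed.

Lemma trepK x : tcls iota (trep x) = x.
Proof.
have tens_eq y z : tcl y = tcl z -> y = z.
  case: y z => c p [c' p'] /= E; move: p p'; rewrite E => p p'.
  by rewrite (proof_irrelevance _ p p').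
by apply: tens_eq; rewrite /= tcl_trep.
Qed.

Lemma teqv_trep_tcls l : teqv iota (trep (tcls iota l)) l.
Proof. by rewrite -tcl_trep; apply: teqv_refl. Qed.

Lemma tclsP x : exists l, x = tcls iota l.
Proof. by exists (trep x); rewrite trepK. Qed.

Lemma tadd_tcls l1 l2 : tadd (tcls iota l1) (tcls iota l2) = tcls iota (l1 ++ l2).
Proof.
apply: tcls_eq => M f hf; rewrite !big_cat /=.
by rewrite (teqv_trep_tcls l1 hf) (teqv_trep_tcls l2 hf).
Qed.

Definition tlift (M : lmodType R) (f : U -> S -> M) x : M :=
  \sum_(p <- trep x) f p.1 p.2.

Lemma tlift_tcls (M : lmodType R) (f : U -> S -> M) l :
  tbilin iota f -> tlift f (tcls iota l) = \sum_(p <- l) f p.1 p.2.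
Proof. by move=> hf; rewrite /tlift (teqv_trep_tcls l hf). Qed.

End TensorClasses.

Lemma tcls_map_trep (R : comPzRingType) (V V' : rmod R) (U U' : Type)
    (iota : U -> V) (iota' : U' -> V') (S S' : ralg R) (g : U * S -> U' * S') l :
  (forall (M : lmodType R) (f : U' -> S' -> M), tbilin iota' f ->
      tbilin iota (fun u s => f (g (u, s)).1 (g (u, s)).2)) ->
  tcls iota' (map g (trep (tcls iota l))) = tcls iota' (map g l).
Proof.
move=> hg; apply: tcls_eq => M f hf; rewrite !big_map.
have uncurry l' : \sum_(p <- l') f (g p).1 (g p).2 =
    \sum_(p <- l') (fun u s => f (g (u, s)).1 (g (u, s)).2) p.1 p.2.
  by apply: eq_bigr => -[].
by rewrite !uncurry (teqv_trep_tcls l (hg M f hf)).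
Qed.

Lemma tcls_map2_trep (R : comPzRingType) (V : rmod R) (U : Type) (iota : U -> V)
    (S S' : ralg R) (phi : S -> S') l :
  (forall s s', phi (aadd S s s') = aadd S' (phi s) (phi s')) ->
  (forall r s, phi (ascale S r s) = ascale S' r (phi s)) ->
  tcls iota [seq (p.1, phi p.2) | p <- trep (tcls iota l)] =
  tcls iota [seq (p.1, phi p.2) | p <- l].
Proof.
move=> phiD phiZ; apply: tcls_map_trep => M f [fD fZ fDr fZr]; split => /=.
- by move=> u u' u'' s E; apply: fD.
- by move=> r u u' s E; apply: fZ.
- by move=> u s s'; rewrite phiD fDr.
- by move=> r u s; rewrite phiZ fZr.
Qed.

Section BilinearOnModule.
Variables (R : comPzRingType) (V : lmodType R) (S : ralg R) (M : lmodType R).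
Variable f : V -> S -> M.

Lemma tbilin_intro :
  (forall u u' s, f (u + u') s = f u s + f u' s) ->
  (forall r u s, f (r *: u) s = r *: f u s) ->
  (forall u s s', f u (aadd S s s') = f u s + f u s') ->
  (forall r u s, f u (ascale S r s) = r *: f u s) ->
  tbilin (@id (rmod_of V)) f.
Proof. by move=> fD fZ fDr fZr; split => [u u' u'' s /= ->|r u u' s /= ->|//|//]. Qed.

Hypothesis hf : tbilin (@id (rmod_of V)) f.

Lemma tbilinDl u u' s : f (u + u') s = f u s + f u' s.
Proof. by case: hf => fD _ _ _; apply: fD. Qed.

Lemma tbilinZl r u s : f (r *: u) s = r *: f u s.
Proof. by case: hf => _ fZ _ _; apply: fZ. Qed.

Lemma tbilinDr u s s' : f u (aadd S s s') = f u s + f u s'.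
Proof. by case: hf => _ _ fD _; apply: fD. Qed.

Lemma tbilinZr r u s : f u (ascale S r s) = r *: f u s.
Proof. by case: hf => _ _ _ fZ; apply: fZ. Qed.

Lemma tbilin0l s : f 0 s = 0.
Proof. by apply: (@addrI _ (f 0 s)); rewrite -tbilinDl !addr0. Qed.

Lemma tbilin_suml (I : Type) (r : seq I) (g : I -> V) s :
  f (\sum_(i <- r) g i) s = \sum_(i <- r) f (g i) s.
Proof.
elim: r => [|a r IH]; first by rewrite !big_nil tbilin0l.
by rewrite !big_cons tbilinDl IH.
Qed.

End BilinearOnModule.

Definition mul_bilinear (R : comPzRingType) (S : ralg R) : Prop :=
  [/\ (forall s t t', amul S s (aadd S t t') = aadd S (amul S s t) (amul S s t')),
      (forall s s' t, amul S (aadd S s s') t = aadd S (amul S s t) (amul S s' t)),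
      (forall r s t, amul S s (ascale S r t) = ascale S r (amul S s t)) &
      (forall r s t, amul S (ascale S r s) t = ascale S r (amul S s t))].

Lemma ralg_of_mul_bilinear (R : comPzRingType) (K : comAlgType R) :
  mul_bilinear (ralg_of K).
Proof.
split=> [s t t'|s s' t|r s t|r s t] /=.
- exact: (@mulrDr K).
- exact: (@mulrDl K).
- by rewrite (@scalerAr _ K).
- by rewrite (@scalerAl _ K).
Qed.

Lemma dual_mul_bilinear (R : comPzRingType) : mul_bilinear (dual R).
Proof. by split=> * /=; congr pair; ring. Qed.

Section ScalarActions.
Variables (Phi : comPzRingType) (V : rmod Phi) (U : Type) (iota : U -> V).
Variable K : comAlgType Phi.
Local Notation tc := (tcls iota (S := ralg_of K)).
Implicit Types (l : seq (U * K)).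

Lemma topp_tcls l : topp (tc l) = tc [seq (p.1, - p.2) | p <- l].
Proof.
apply: (@tcls_map2_trep _ _ _ _ (ralg_of K) (ralg_of K) (fun s : K => - s)) => /=.
  by move=> s s'; rewrite opprD.
by move=> r s; rewrite scalerN.
Qed.

Lemma tscaleS_tcls (k : K) l :
  tscaleS (S := ralg_of K) k (tc l) = tc [seq (p.1, k * p.2) | p <- l].
Proof.
apply: (@tcls_map2_trep _ _ _ _ (ralg_of K) (ralg_of K) (fun s : K => k * s)) => /=.
  by move=> s s'; rewrite mulrDr.
by move=> r s; rewrite scalerAr.
Qed.

End ScalarActions.

Section TensorModule.
Variables (Phi : comPzRingType) (A : lmodType Phi) (K : comAlgType Phi).
Local Notation tc := (tcls (@id (rmod_of A)) (S := ralg_of K)).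

Definition tensK := tens (@id (rmod_of A)) (ralg_of K).
Local Notation tadd := (@tadd _ _ _ _ (ralg_of K) : tensK -> tensK -> tensK).
Local Notation tzero := (tzero (@id (rmod_of A)) (ralg_of K)).
Local Notation tscaleS := (@tscaleS _ _ _ _ (ralg_of K) : K -> tensK -> tensK).

Lemma tensK_addA : associative tadd.
Proof.
move=> x y z; case: (tclsP x) => l1 ->; case: (tclsP y) => l2 ->; case: (tclsP z) => l3 ->.
by rewrite !tadd_tcls catA.
Qed.

Lemma tensK_addC : commutative tadd.
Proof.
move=> x y; case: (tclsP x) => l1 ->; case: (tclsP y) => l2 ->.
by rewrite !tadd_tcls; apply: tcls_eq => M f hf; rewrite !big_cat /= addrC.
Qed.

Lemma tensK_add0 : left_id tzero tadd.
Proof. by move=> x; case: (tclsP x) => l ->; rewrite tadd_tcls. Qed.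

Lemma tensK_addN : left_inverse tzero (@topp _ _ _ _ (ralg_of K)) tadd.
Proof.
move=> x; case: (tclsP x) => l ->; rewrite topp_tcls tadd_tcls.
apply: tcls_eq => M f hf; rewrite big_cat big_map big_nil /= -big_split big1 // => p _.
have /= := tbilinZr hf (-1) p.1 p.2; rewrite scaleN1r => ->.
by rewrite scaleN1r addNr.
Qed.

HB.instance Definition _ := gen_eqMixin tensK.
HB.instance Definition _ := gen_choiceMixin tensK.
HB.instance Definition _ :=
  GRing.isZmodule.Build tensK tensK_addA tensK_addC tensK_add0 tensK_addN.

Lemma tensK_scaleA (a b : K) v : tscaleS a (tscaleS b v) = tscaleS (a * b) v.
Proof.
case: (tclsP v) => l ->; rewrite !tscaleS_tcls -map_comp.
by congr tc; apply: eq_map => p /=; rewrite mulrA.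
Qed.

Lemma tensK_scale1 : left_id 1 tscaleS.
Proof.
move=> v; case: (tclsP v) => l ->; rewrite tscaleS_tcls; congr tc.
by rewrite -[RHS]map_id; apply: eq_map => -[u s] /=; rewrite mul1r.
Qed.

Lemma tensK_scaleDr : right_distributive tscaleS +%R.
Proof.
move=> a x y; case: (tclsP x) => l1 ->; case: (tclsP y) => l2 ->.
by rewrite /GRing.add /= tadd_tcls !tscaleS_tcls map_cat tadd_tcls.
Qed.

Lemma tensK_scaleDl v : {morph tscaleS^~ v : a b / a + b}.
Proof.
move=> a b; case: (tclsP v) => l ->.
rewrite /GRing.add /= !tscaleS_tcls tadd_tcls; apply: tcls_eq => M f hf.
rewrite big_cat !big_map /= -big_split; apply: eq_bigr => p _.
by rewrite mulrDl (tbilinDr hf).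
Qed.

HB.instance Definition _ :=
  GRing.Zmodule_isLmodule.Build K tensK tensK_scaleA tensK_scale1 tensK_scaleDr tensK_scaleDl.

Definition tpure (u : A) (k : K) : tensK := tc [:: (u, k)].

Lemma tcls_cons p l : tc (p :: l) = tpure p.1 p.2 + tc l.
Proof. by rewrite /GRing.add /= /tpure tadd_tcls; case: p. Qed.

Lemma tpureDl u u' k : tpure (u + u') k = tpure u k + tpure u' k.
Proof.
rewrite /GRing.add /= /tpure tadd_tcls; apply: tcls_eq => M f hf.
by rewrite !big_cons !big_nil /= !addr0 (tbilinDl hf).
Qed.

Lemma tpureZl r u k : tpure (r *: u) k = tpure u (r *: k).
Proof.
rewrite /tpure; apply: tcls_eq => M f hf.
by rewrite !big_cons !big_nil /= !addr0 (tbilinZl hf) (tbilinZr hf r u k).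
Qed.

Lemma tpureDr u k k' : tpure u (k + k') = tpure u k + tpure u k'.
Proof.
rewrite /GRing.add /= /tpure tadd_tcls; apply: tcls_eq => M f hf.
by rewrite !big_cons !big_nil /= !addr0 (tbilinDr hf u k k').
Qed.

Lemma scale_tpure c u k : c *: tpure u k = tpure u (c * k).
Proof. by rewrite /GRing.scale /= /tpure tscaleS_tcls. Qed.

Lemma tpure0l k : tpure 0 k = 0.
Proof.
rewrite /tpure; apply: tcls_eq => M f hf.
by rewrite !big_cons !big_nil /= addr0 (tbilin0l hf).
Qed.

Lemma tpureNl u k : tpure (- u) k = - tpure u k.
Proof. by apply: (@addrI _ (tpure u k)); rewrite -tpureDl !subrr tpure0l. Qed.

End TensorModule.

Section BilinearMap.
Variables (R : comPzRingType) (V W : lmodType R) (psi : V -> V -> W).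
Hypothesis hpsi : bilinear_map psi.

Lemma psi0r a : psi a 0 = 0.
Proof.
case: hpsi => h _; apply: (@addrI _ (psi a 0)).
by rewrite addr0 -{1}(scale1r (psi a 0)) -h scale1r addr0.
Qed.

Lemma psi0l a : psi 0 a = 0.
Proof.
case: hpsi => _ h; apply: (@addrI _ (psi 0 a)).
by rewrite addr0 -{1}(scale1r (psi 0 a)) -h scale1r addr0.
Qed.

Lemma psiDr a c c' : psi a (c + c') = psi a c + psi a c'.
Proof. by case: hpsi => h _; rewrite -{1}(scale1r c) h scale1r. Qed.

Lemma psiDl a a' c : psi (a + a') c = psi a c + psi a' c.
Proof. by case: hpsi => _ h; rewrite -{1}(scale1r a) h scale1r. Qed.

Lemma psiZr a r c : psi a (r *: c) = r *: psi a c.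
Proof. by case: hpsi => h _; rewrite -[r *: c]addr0 h psi0r addr0. Qed.

Lemma psiZl a r c : psi (r *: a) c = r *: psi a c.
Proof. by case: hpsi => _ h; rewrite -[r *: a]addr0 h psi0l addr0. Qed.

Lemma psiNr a c : psi a (- c) = - psi a c.
Proof. by rewrite -scaleN1r psiZr scaleN1r. Qed.

Lemma psiNl a c : psi (- a) c = - psi a c.
Proof. by rewrite -scaleN1r psiZl scaleN1r. Qed.

Variables (S : ralg R).
Hypothesis hS : mul_bilinear S.

Lemma psiS_tcls (l1 l2 : seq (V * S)) :
  psiS (V := rmod_of V) (W := rmod_of W) psi
       (tcls (@id (rmod_of V)) l1) (tcls (@id (rmod_of V)) l2) =
  tcls (@id (rmod_of W)) [seq (psi p.1 q.1, amul S p.2 q.2) | p <- l1, q <- l2].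
Proof.
case: hS => mulDr mulDl mulZr mulZl.
rewrite /psiS; apply: tcls_eq => M f hf; rewrite !big_allpairs_dep /=.
have sum_r (p : V * S) :
    \sum_(q <- trep (tcls (@id (rmod_of V)) l2)) f (psi p.1 q.1) (amul S p.2 q.2) =
    \sum_(q <- l2) f (psi p.1 q.1) (amul S p.2 q.2).
  apply: (teqv_trep_tcls l2 (f := fun u s => f (psi p.1 u) (amul S p.2 s))).
  apply: tbilin_intro => [u u' s|r u s|u s s'|r u s].
  - by rewrite psiDr (tbilinDl hf).
  - by rewrite psiZr (tbilinZl hf).
  - by rewrite mulDr (tbilinDr hf).
  - by rewrite mulZr (tbilinZr hf).
rewrite (eq_bigr _ (fun p _ => sum_r p)) exchange_big [RHS]exchange_big /=.
apply: eq_bigr => q _.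
apply: (teqv_trep_tcls l1 (f := fun u s => f (psi u q.1) (amul S s q.2))).
apply: tbilin_intro => [u u' s|r u s|u s s'|r u s].
- by rewrite psiDl (tbilinDl hf).
- by rewrite psiZl (tbilinZl hf).
- by rewrite mulDl (tbilinDr hf).
- by rewrite mulZl (tbilinZr hf).
Qed.

End BilinearMap.

Section BilinearExtension.
Variables (Phi : comPzRingType) (A B : lmodType Phi) (psi : A -> A -> B).
Variable K : comAlgType Phi.
Hypothesis hpsi : bilinear_map psi.

Definition psiK : tensK A K -> tensK A K -> tensK B K :=
  @psiS Phi (rmod_of A) (rmod_of B) psi (ralg_of K).

Local Notation tcA l := (tcls (@id (rmod_of A)) (S := ralg_of K) l : tensK A K).
Local Notation tcB l := (tcls (@id (rmod_of B)) (S := ralg_of K) l : tensK B K).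

Lemma psiK_tcls l1 l2 :
  psiK (tcA l1) (tcA l2) = tcB [seq (psi p.1 q.1, p.2 * q.2) | p <- l1, q <- l2].
Proof. exact: (psiS_tcls hpsi (ralg_of_mul_bilinear K)). Qed.

Lemma psiK_tpure a k c k' : psiK (tpure a k) (tpure c k') = tpure (psi a c) (k * k').
Proof. exact: psiK_tcls. Qed.

Lemma psiK_bilinear : bilinear_map psiK.
Proof.
pose scl (V : lmodType Phi) (r : K) (l : seq (rmod_of V * ralg_of K)) :
  seq (rmod_of V * ralg_of K) := [seq (p.1, (r * p.2 : ralg_of K)) | p <- l].
have sclE (V : lmodType Phi) r l :
    r *: (tcls (@id (rmod_of V)) l : tensK V K) = tcls (@id (rmod_of V)) (scl V r l).
  exact: tscaleS_tcls.
have addE (V : lmodType Phi) (l l' : seq (rmod_of V * ralg_of K)) :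
    (tcls (@id (rmod_of V)) l : tensK V K) + tcls (@id (rmod_of V)) l' =
    tcls (@id (rmod_of V)) (l ++ l').
  exact: tadd_tcls.
split.
- move=> a r c c'; case: (tclsP a) => la ->; case: (tclsP c) => lc ->.
  case: (tclsP c') => lc' ->.
  rewrite sclE addE !psiK_tcls sclE addE; apply: tcls_eq => M f hf.
  rewrite big_cat !big_map !big_allpairs_dep /= -big_split /=.
  apply: eq_bigr => p _; rewrite big_cat big_map /=; congr (_ + _).
  by apply: eq_bigr => q _; rewrite mulrCA.
- move=> c r a a'; case: (tclsP a) => la ->; case: (tclsP a') => la' ->.
  case: (tclsP c) => lc ->.
  rewrite sclE addE !psiK_tcls sclE addE; apply: tcls_eq => M f hf.
  rewrite !big_cat !big_map !big_allpairs_dep /= big_cat big_map.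
  by congr (_ + _); apply: eq_bigr => p _; apply: eq_bigr => q _; rewrite mulrA.
Qed.

End BilinearExtension.

Lemma sum_pair (R : comPzRingType) (V W : lmodType R) (I : Type) (r : seq I)
    (F : I -> V) (G : I -> W) :
  \sum_(i <- r) ((F i, G i) : V * W) = (\sum_(i <- r) F i, \sum_(i <- r) G i).
Proof. by elim: r => [|a r IH]; rewrite ?big_nil // !big_cons IH. Qed.

Section DualCoordinates.
Variables (R : comPzRingType) (V : lmodType R).
Local Notation TV := (tens (@id (rmod_of V)) (dual R)).
Local Notation tcV := (tcls (@id (rmod_of V)) (S := dual R)).
Implicit Types (x y : TV) (l : seq (rmod_of V * dual R)).

Definition dual_coord x : V * V :=
  tlift (fun (v : rmod_of V) (s : dual R) => (s.1 *: v, s.2 *: v)) x.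

Definition dual_tens (a b : V) : TV := tcV [:: (a, (1, 0)); (b, (0, 1))].

Lemma dual_coord_tcls l :
  dual_coord (tcV l) = (\sum_(p <- l) p.2.1 *: p.1, \sum_(p <- l) p.2.2 *: p.1).
Proof.
rewrite /dual_coord tlift_tcls ?sum_pair //.
by apply: tbilin_intro => * /=; congr pair; rewrite /= ?scalerDr ?scalerDl ?scalerA // mulrC.
Qed.

Lemma dual_tensK a b : dual_coord (dual_tens a b) = (a, b).
Proof. by rewrite dual_coord_tcls !big_cons !big_nil /= !scale1r !scale0r !addr0 add0r. Qed.

Lemma dual_coordK x : dual_tens (dual_coord x).1 (dual_coord x).2 = x.
Proof.
case: (tclsP x) => l ->; rewrite dual_coord_tcls /dual_tens; apply: tcls_eq => M f hf /=.
rewrite !big_cons big_nil addr0 !(tbilin_suml hf) -big_split /=.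
apply: eq_bigr => -[u [a b]] _ /=.
rewrite !(tbilinZl hf) -!(tbilinZr hf) -(tbilinDr hf) /=.
by rewrite !mulr1 !mulr0 addr0 add0r.
Qed.

Lemma dual_coord_inj x y : dual_coord x = dual_coord y -> x = y.
Proof. by move=> E; rewrite -(dual_coordK x) -(dual_coordK y) E. Qed.

Lemma dual_coordD x y : dual_coord (tadd x y) = dual_coord x + dual_coord y.
Proof.
case: (tclsP x) => l1 ->; case: (tclsP y) => l2 ->.
by rewrite tadd_tcls !dual_coord_tcls !big_cat.
Qed.

Lemma dual_coord0 : dual_coord (tzero (@id (rmod_of V)) (dual R)) = 0.
Proof. by rewrite dual_coord_tcls !big_nil. Qed.

Lemma dual_coordN x : dual_coord (topp x) = - dual_coord x.
Proof.
case: (tclsP x) => l ->; rewrite /topp.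
rewrite (@tcls_map2_trep _ _ _ _ (dual R) (dual R) (aopp (dual R))) /=.
- rewrite !dual_coord_tcls !big_map /=.
  by congr pair; rewrite /= -sumrN; apply: eq_bigr => p _; rewrite scaleNr.
- by move=> s s' /=; rewrite !opprD.
- by move=> r s /=; rewrite !mulrN.
Qed.

Lemma dual_coordZ (lam : dual R) x :
  dual_coord (tscaleS lam x) =
  (lam.1 *: (dual_coord x).1, lam.1 *: (dual_coord x).2 + lam.2 *: (dual_coord x).1).
Proof.
case: (tclsP x) => l ->; rewrite /tscaleS.
rewrite (@tcls_map2_trep _ _ _ _ (dual R) (dual R) (amul (dual R) lam)).
- rewrite !dual_coord_tcls !big_map /= !scaler_sumr -big_split /=.
  by congr pair; apply: eq_bigr => p _; rewrite ?scalerDl !scalerA.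
- by move=> s s' /=; congr pair; ring.
- by move=> r s /=; congr pair; ring.
Qed.

Lemma dual_coordZR (r : R) x : dual_coord (tscaleR r x) = r *: dual_coord x.
Proof.
case: (tclsP x) => l ->; rewrite /tscaleR.
rewrite (@tcls_map2_trep _ _ _ _ (dual R) (dual R) (ascale (dual R) r)).
- rewrite !dual_coord_tcls !big_map /=.
  by congr pair; rewrite /= scaler_sumr; apply: eq_bigr => p _; rewrite scalerA.
- by move=> s s' /=; congr pair; ring.
- by move=> r' s /=; congr pair; ring.
Qed.

Lemma dual_coord_pure v : dual_coord (tcV [:: (v, aone (dual R))]) = (v, 0).
Proof. by rewrite dual_coord_tcls !big_cons !big_nil /= scale1r scale0r !addr0. Qed.

Lemma tpush_eps0_eq0P x :
  tpush (@eps0 R) x = tzero (@id (rmod_of V)) (ralg_self R) <-> (dual_coord x).1 = 0.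
Proof.
case: (tclsP x) => l ->.
rewrite /tpush (@tcls_map2_trep _ _ _ _ (dual R) (ralg_self R) (@eps0 R)) //.
rewrite dual_coord_tcls /=; split.
- move=> /tcls_inj /(_ _ (fun (v : rmod_of V) (s : ralg_self R) => s *: v)).
  rewrite big_nil big_map; apply.
  by apply: tbilin_intro => * /=; rewrite ?scalerDr ?scalerDl ?scalerA // mulrC.
- move=> E; apply: tcls_eq => M f hf; rewrite big_nil big_map /=.
  have -> : \sum_(p <- l) f p.1 p.2.1 = f (\sum_(p <- l) p.2.1 *: p.1) 1.
    rewrite (tbilin_suml hf); apply: eq_bigr => p _.
    by rewrite (tbilinZl hf) -(tbilinZr hf) /= mulr1.
  by rewrite E (tbilin0l hf).
Qed.

End DualCoordinates.

Section HatClosure.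
Variables (R : comPzRingType) (V W : rmod R) (psi : V -> V -> W) (G : V * W -> Prop).
Variable S : ralg R.
Local Notation hatG := (hat psi G (S := S)).
Local Notation gen g := (tcls (@id V) [:: (g.1, aone S)], tcls (@id W) [:: (g.2, aone S)]).

Lemma hat_gen g : G g -> hatG (gen g).
Proof. by move=> Gg H HG _; apply: HG. Qed.

Lemma hat_avg : almost_vector_group (V := tmod V S) (W := tmod W S) (psiS psi (S := S)) hatG.
Proof.
split; [split|..].
- by move=> H _ [[]].
- by move=> x y hx hy H HG hH; case: (hH) => [[_ hm _] _ _]; apply: hm; [apply: hx|apply: hy].
- by move=> x hx H HG hH; case: (hH) => [[_ _ hi] _ _]; apply: hi; apply: hx.
- by move=> l x hx H HG hH; case: (hH) => [_ hs _]; apply: hs; apply: hx.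
- by move=> l b hx H HG hH; case: (hH) => [_ _ hs]; apply: hs; apply: hx.
Qed.

Lemma hat_ind (P : T V S * T W S -> Prop) :
  (forall g, G g -> P (gen g)) ->
  almost_vector_group (V := tmod V S) (W := tmod W S) (psiS psi (S := S)) P ->
  forall x, hatG x -> P x.
Proof. by move=> PG hP x; apply. Qed.

End HatClosure.

(* Module identities are proved by [ring] after embedding W into the
   square-zero extension R + W. *)
Section SquareZeroExtension.
Variables (R : comPzRingType) (W : lmodType R).

Definition sqzext := (R * W)%type.
HB.instance Definition _ := GRing.Zmodule.on sqzext.

Definition sqzext_mul (x y : sqzext) : sqzext := (x.1 * y.1, x.1 *: y.2 + y.1 *: x.2).

Lemma sqzext_mulA : associative sqzext_mul.
Proof.
move=> [a x] [b y] [c z]; rewrite /sqzext_mul /=; congr pair; first by rewrite mulrA.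
by rewrite !scalerDr !scalerA -addrA (mulrC a c) (mulrC b c).
Qed.

Lemma sqzext_mulC : commutative sqzext_mul.
Proof. by move=> [a x] [b y]; rewrite /sqzext_mul /= mulrC addrC. Qed.

Lemma sqzext_mul1 : left_id (1, 0) sqzext_mul.
Proof. by move=> [a x]; rewrite /sqzext_mul /= mul1r scale1r scaler0 addr0. Qed.

Lemma sqzext_mulDl : left_distributive sqzext_mul +%R.
Proof.
move=> [a x] [b y] [c z]; rewrite /sqzext_mul /=; congr pair; first by rewrite mulrDl.
by rewrite scalerDl scalerDr addrACA.
Qed.

HB.instance Definition _ :=
  GRing.Zmodule_isComPzRing.Build sqzext sqzext_mulA sqzext_mulC sqzext_mul1 sqzext_mulDl.

Definition sqz_emb (w : W) : sqzext := (0, w).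
Definition sqz_cst (r : R) : sqzext := (r, 0).

Lemma sqz_emb_inj : injective sqz_emb.
Proof. by move=> a b []. Qed.

Lemma sqz_embD a b : sqz_emb (a + b) = sqz_emb a + sqz_emb b.
Proof. by rewrite /sqz_emb; congr pair; rewrite /= addr0. Qed.

Lemma sqz_embN a : sqz_emb (- a) = - sqz_emb a.
Proof. by rewrite /sqz_emb; congr pair; rewrite /= oppr0. Qed.

Lemma sqz_emb0 : sqz_emb 0 = 0.
Proof. by []. Qed.

Lemma sqz_embZ r a : sqz_emb (r *: a) = sqz_cst r * sqz_emb a.
Proof. by rewrite /sqz_emb /sqz_cst; congr pair; rewrite /= ?mulr0 // scaler0 addr0. Qed.

Lemma sqz_cstD r s : sqz_cst (r + s) = sqz_cst r + sqz_cst s.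
Proof. by rewrite /sqz_cst; congr pair; rewrite /= addr0. Qed.

Lemma sqz_cstM r s : sqz_cst (r * s) = sqz_cst r * sqz_cst s.
Proof. by rewrite /sqz_cst; congr pair; rewrite /= !scaler0 addr0. Qed.

Lemma sqz_cstN r : sqz_cst (- r) = - sqz_cst r.
Proof. by rewrite /sqz_cst; congr pair; rewrite /= oppr0. Qed.

Lemma sqz_cst1 : sqz_cst 1 = 1.
Proof. by []. Qed.

Lemma sqz_cst0 : sqz_cst 0 = 0.
Proof. by []. Qed.

End SquareZeroExtension.

Ltac module_ring :=
  apply: sqz_emb_inj;
  rewrite ?(sqz_embD, sqz_embN, sqz_emb0, sqz_embZ,
            sqz_cstM, sqz_cstD, sqz_cstN, sqz_cst1, sqz_cst0);
  ring.

Section DualGroup.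
Variables (R : comPzRingType) (V W : lmodType R) (psi : V -> V -> W).
Hypothesis hpsi : bilinear_map psi.
Local Notation TV := (T (rmod_of V) (dual R)).
Local Notation TW := (T (rmod_of W) (dual R)).
Local Notation VD := (tmod (rmod_of V) (dual R)).
Local Notation WD := (tmod (rmod_of W) (dual R)).
Local Notation PS := (@psiS R (rmod_of V) (rmod_of W) psi (dual R)).
Let p0r := psi0r hpsi. Let p0l := psi0l hpsi.
Let pDl := psiDl hpsi. Let pZl := psiZl hpsi. Let pNr := psiNr hpsi.

Definition dcoord (x : TV * TW) := (dual_coord x.1, dual_coord x.2).
Definition dpoint (a1 a2 : V) (b1 b2 : W) : TV * TW := (dual_tens a1 a2, dual_tens b1 b2).

Lemma dcoord_inj x y : dcoord x = dcoord y -> x = y.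
Proof. by case: x y => [x1 x2] [y1 y2] [/dual_coord_inj -> /dual_coord_inj ->]. Qed.

Lemma dcoord_point a1 a2 b1 b2 : dcoord (dpoint a1 a2 b1 b2) = ((a1, a2), (b1, b2)).
Proof. by rewrite /dcoord /= !dual_tensK. Qed.

Lemma dual_coord_psiS x y :
  dual_coord (PS x y) =
  (psi (dual_coord x).1 (dual_coord y).1,
   psi (dual_coord x).1 (dual_coord y).2 + psi (dual_coord x).2 (dual_coord y).1).
Proof.
rewrite -{1}(dual_coordK x) -{1}(dual_coordK y) /dual_tens.
rewrite (psiS_tcls hpsi (dual_mul_bilinear R)) dual_coord_tcls.
rewrite !big_allpairs_dep !big_cons !big_nil /=.
rewrite !mulr0 !mulr1 !add0r !addr0 !scale0r !scale1r !addr0 !add0r.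
by rewrite addrC.
Qed.

Lemma dcoord_gmul x y a1 a2 b1 b2 c1 c2 d1 d2 :
  dcoord x = ((a1, a2), (b1, b2)) -> dcoord y = ((c1, c2), (d1, d2)) ->
  dcoord (gmul (V := VD) (W := WD) PS x y) =
  ((a1 + c1, a2 + c2), (b1 + d1 + psi a1 c1, b2 + d2 + (psi a1 c2 + psi a2 c1))).
Proof.
case: x => x1 x2; case: y => y1 y2; rewrite /dcoord /= => -[E1 E2] [E3 E4].
by rewrite !dual_coordD dual_coord_psiS E1 E2 E3 E4.
Qed.

Lemma dcoord_ginv x a1 a2 b1 b2 :
  dcoord x = ((a1, a2), (b1, b2)) ->
  dcoord (ginv (V := VD) (W := WD) PS x) =
  ((- a1, - a2), (- b1 + psi a1 a1, - b2 + (psi a1 a2 + psi a2 a1))).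
Proof.
case: x => x1 x2; rewrite /dcoord /= => -[E1 E2].
by rewrite dual_coordD !dual_coordN dual_coord_psiS E1 E2.
Qed.

Lemma dcoord_scale1 (lam : dual R) x a1 a2 b1 b2 :
  dcoord x = ((a1, a2), (b1, b2)) ->
  dcoord (rscale VD lam x.1, rscale WD lam (rscale WD lam x.2)) =
  ((lam.1 *: a1, lam.1 *: a2 + lam.2 *: a1),
   (lam.1 *: (lam.1 *: b1), lam.1 *: (lam.1 *: b2 + lam.2 *: b1) + lam.2 *: (lam.1 *: b1))).
Proof. by case: x => x1 x2; rewrite /dcoord /= => -[E1 E2]; rewrite !dual_coordZ E1 E2. Qed.

Lemma dcoord_scale2 (lam : dual R) b b1 b2 :
  dual_coord b = (b1, b2) ->
  dcoord (rzero VD, rscale WD lam b) = ((0, 0), (lam.1 *: b1, lam.1 *: b2 + lam.2 *: b1)).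
Proof. by move=> E; rewrite /dcoord /= dual_coordZ dual_coord0 E. Qed.

Lemma dcoord_gone : dcoord (gone VD WD) = ((0, 0), (0, 0)).
Proof. by rewrite /dcoord /= !dual_coord0. Qed.

Lemma dcoord_gen (g : V * W) :
  dcoord (tcls (@id (rmod_of V)) [:: (g.1, aone (dual R))],
          tcls (@id (rmod_of W)) [:: (g.2, aone (dual R))]) = ((g.1, 0), (g.2, 0)).
Proof. by rewrite /dcoord /= !dual_coord_pure. Qed.

Section HatDual.
Variable G : V * W -> Prop.
Local Notation hatD := (@hat R (rmod_of V) (rmod_of W) psi G (dual R)).
Local Notation hatD_avg := (@hat_avg R (rmod_of V) (rmod_of W) psi G (dual R)).

Lemma hatD_coord x y : hatD x -> dcoord x = dcoord y -> hatD y.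
Proof. by move=> h /dcoord_inj <-. Qed.

Lemma hat_eps0 : hatD (dpoint 0 0 0 0).
Proof.
have [[h _ _] _ _] := hatD_avg.
by apply: hatD_coord h _; rewrite dcoord_gone dcoord_point.
Qed.

Lemma hat_epsD u v u' v' :
  hatD (dpoint 0 u 0 v) -> hatD (dpoint 0 u' 0 v') -> hatD (dpoint 0 (u + u') 0 (v + v')).
Proof.
move=> h h'; have [[_ hm _] _ _] := hatD_avg.
apply: hatD_coord (hm _ _ h h') _.
rewrite (dcoord_gmul (dcoord_point _ _ _ _) (dcoord_point _ _ _ _)) dcoord_point.
by rewrite !p0l !p0r !addr0.
Qed.

(* The witness is ((1 + k eps) .1 g) g^-1. *)
Lemma hat_eps_gen g (k : R) : G g ->
  hatD (dpoint 0 (k *: g.1) 0 (k *: (g.2 + g.2 - psi g.1 g.1))).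
Proof.
move=> Gg; have hg := @hat_gen R (rmod_of V) (rmod_of W) psi G (dual R) _ Gg.
have [[_ hm hi] hs1 _] := hatD_avg.
apply: hatD_coord (hm _ _ (hs1 (1, k) _ hg) (hi _ hg)) _.
rewrite (dcoord_gmul (dcoord_scale1 _ (dcoord_gen g)) (dcoord_ginv (dcoord_gen g))) dcoord_point /=.
by rewrite ?(pDl, pZl, pNr, p0l, p0r, oppr0); congr pair; congr pair; module_ring.
Qed.

Lemma hat_eps_center b (k : R) : G (0, b) -> hatD (dpoint 0 0 0 (k *: b)).
Proof.
move=> Gb; have := @hat_gen R (rmod_of V) (rmod_of W) psi G (dual R) _ Gb.
have [_ _ hs2] := hatD_avg.
have -> : tcls (@id (rmod_of V)) [:: ((0, b).1, aone (dual R))] = rzero VD.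
  by apply: dual_coord_inj; rewrite dual_coord_pure dual_coord0.
move=> /(hs2 (0, k)) /hatD_coord; apply.
by rewrite (dcoord_scale2 _ (dual_coord_pure _)) dcoord_point /= scale0r scaler0 add0r.
Qed.

End HatDual.

End DualGroup.

Section DualShape.
Variables (R : comPzRingType) (V W : lmodType R) (psi : V -> V -> W).
Hypothesis hpsi : bilinear_map psi.
Let p0r := psi0r hpsi. Let p0l := psi0l hpsi. Let pDr := psiDr hpsi. Let pDl := psiDl hpsi.
Let pZr := psiZr hpsi. Let pZl := psiZl hpsi. Let pNr := psiNr hpsi. Let pNl := psiNl hpsi.
Local Notation TV := (T (rmod_of V) (dual R)).
Local Notation TW := (T (rmod_of W) (dual R)).

Variable G : V * W -> Prop.
Hypothesis hG : almost_vector_group (V := rmod_of V) (W := rmod_of W) psi G.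
Local Notation hatD := (@hat R (rmod_of V) (rmod_of W) psi G (dual R)).

Variable I : V -> W -> Prop.
Hypothesis I0 : I 0 0.
Hypothesis ID : forall u v u' v', I u v -> I u' v' -> I (u + u') (v + v').
Hypothesis IZ : forall r u v, I u v -> I (r *: u) (r *: v).
Hypothesis I_commutator : forall u v g, I u v -> G g -> I 0 (psi u g.1 - psi g.1 u).
Hypothesis I_center : forall u v k, I u v -> I 0 (k *: v).
Hypothesis I_gen : forall g, G g -> I g.1 (g.2 + g.2 - psi g.1 g.1).
Hypothesis I_centerG : forall b k, G (0, b) -> I 0 (k *: b).

Lemma I_tangent u v : I u v -> I u 0.
Proof. by move=> h; have := ID h (I_center (-1) h); rewrite addr0 scaleN1r subrr. Qed.

Definition dual_shape (x : TV * TW) := exists2 g, G g & exists u v, I u v /\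
  dcoord x = ((g.1, u), (g.2, v + psi g.1 u)).

Lemma dual_shape_avg :
  almost_vector_group (V := tmod (rmod_of V) (dual R)) (W := tmod (rmod_of W) (dual R))
    (@psiS R (rmod_of V) (rmod_of W) psi (dual R)) dual_shape.
Proof.
case: hG => [[G1 GM GV] GZ1 GZ2]; split; [split|..].
- exists (0, 0) => //; exists 0, 0; split=> //.
  by rewrite dcoord_gone /= p0r addr0.
- move=> x y [g Gg [u [v [Iuv Ex]]]] [g' Gg' [u' [v' [Iuv' Ey]]]].
  exists (gmul (V := rmod_of V) (W := rmod_of W) psi g g'); first exact: GM.
  exists (u + u'), (v + v' + (psi u g'.1 - psi g'.1 u)); split.
    by have := ID (ID Iuv Iuv') (I_commutator Iuv Gg'); rewrite addr0.
  rewrite (dcoord_gmul hpsi Ex Ey) /=; congr pair; congr pair.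
  by rewrite !pDl !pDr; module_ring.
- move=> x [g Gg [u [v [Iuv Ex]]]].
  exists (ginv (V := rmod_of V) (W := rmod_of W) psi g); first exact: GV.
  exists (- u), (- v + (psi u g.1 - psi g.1 u)); split.
    by have := ID (IZ (-1) Iuv) (I_commutator Iuv Gg); rewrite !scaleN1r addr0.
  rewrite (dcoord_ginv hpsi Ex) /=; congr pair; congr pair.
  by rewrite ?pDl ?pDr ?pNl ?pNr; module_ring.
- move=> lam x [g Gg [u [v [Iuv Ex]]]].
  exists (lam.1 *: g.1, lam.1 *: (lam.1 *: g.2)); first exact: (GZ1 lam.1 g Gg).
  exists (lam.1 *: u + lam.2 *: g.1),
         ((lam.1 * lam.1) *: v + (lam.1 * lam.2) *: (g.2 + g.2 - psi g.1 g.1)); split.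
    have := ID (ID (IZ lam.1 (I_tangent Iuv)) (I_center (lam.1 * lam.1) Iuv))
               (ID (IZ lam.2 (I_tangent (I_gen Gg))) (I_center (lam.1 * lam.2) (I_gen Gg))).
    by rewrite !scaler0 !addr0 !add0r.
  rewrite (dcoord_scale1 lam Ex) /=; congr pair; congr pair.
  by rewrite ?pDl ?pDr ?pZl ?pZr ?pNr ?pNl; module_ring.
- move=> lam b [[g1 g2] Gg [u [v [Iuv]]]].
  rewrite /dcoord /= dual_coord0 => -[[E1 E2] E3]; subst g1 u.
  exists (0, lam.1 *: g2); first exact: GZ2.
  exists 0, (lam.1 *: v + lam.2 *: g2); split.
    by rewrite -[0]addr0; apply: ID; [apply: I_center Iuv|apply: I_centerG].
  rewrite (@dcoord_scale2 R V W lam _ _ _ E3) /=.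
  by rewrite !p0r !addr0.
Qed.

Lemma hat_dual_shape x : hatD x -> dual_shape x.
Proof.
apply: hat_ind; last exact: dual_shape_avg.
move=> g Gg; exists g => //; exists 0, 0; split=> //.
by rewrite dcoord_gen /= p0r addr0.
Qed.

Lemma hat_dual_tangent x : hatD x -> (dual_coord x.1).1 = 0 -> (dual_coord x.2).1 = 0 ->
  exists u v, I u v /\ dcoord x = ((0, u), (0, v)).
Proof.
move=> /hat_dual_shape [g Gg [u [v [Iuv Ex]]]] E1 E2.
have [Ea Eb] : dual_coord x.1 = (g.1, u) /\ dual_coord x.2 = (g.2, v + psi g.1 u).
  by case: Ex => -> ->.
rewrite Ea /= in E1; rewrite Eb /= in E2.
by exists u, v; split => //; rewrite /dcoord Ea Eb E1 E2 p0l addr0.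
Qed.

End DualShape.

Section LieAlgebraOfG.
Variables (Phi : comPzRingType) (A B : lmodType Phi) (psi : A -> A -> B) (G : A * B -> Prop).
Hypothesis hpsi : bilinear_map psi.
Hypothesis hG : almost_vector_group (V := rmod_of A) (W := rmod_of B) psi G.
Let p0r := psi0r hpsi. Let p0l := psi0l hpsi. Let pDr := psiDr hpsi. Let pDl := psiDl hpsi.
Let pZr := psiZr hpsi. Let pZl := psiZl hpsi. Let pNr := psiNr hpsi. Let pNl := psiNl hpsi.
Local Notation gmul := (gmul (V := rmod_of A) (W := rmod_of B) psi).
Local Notation ginv := (ginv (V := rmod_of A) (W := rmod_of B) psi).

Inductive lie_span : A -> B -> Prop :=
  | lie_span0 : lie_span 0 0
  | lie_spanD u v u' v' : lie_span u v -> lie_span u' v' -> lie_span (u + u') (v + v')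
  | lie_spanZ r u v : lie_span u v -> lie_span (r *: u) (r *: v)
  | lie_span_gen (g : A * B) : G g -> lie_span g.1 (g.2 + g.2 - psi g.1 g.1)
  | lie_span_center b : G (0, b) -> lie_span 0 b.

Lemma avg_centerZ b k : G (0, b) -> G (0, k *: b).
Proof. by case: hG => _ _; apply. Qed.

Lemma avg_center_gen (g : A * B) : G g -> G (0, g.2 + g.2 - psi g.1 g.1).
Proof.
case: hG => [[_ GM GV] GZ1 _] Gg.
suff <- : gmul ((1 + 1) *: g.1, (1 + 1) *: ((1 + 1) *: g.2)) (ginv (gmul g g)) =
          (0, g.2 + g.2 - psi g.1 g.1).
  by apply: GM (GZ1 (1 + 1) g Gg) (GV _ (GM _ _ Gg Gg)).
rewrite /gmul /ginv /=; congr pair; first by module_ring.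
by rewrite ?(pDl, pDr, pNl, pNr, pZl, pZr); module_ring.
Qed.

Lemma avg_commutator (g g' : A * B) : G g -> G g' -> G (0, psi g.1 g'.1 - psi g'.1 g.1).
Proof.
case: hG => [[_ GM GV] _ _] Gg Gg'.
suff <- : gmul (gmul g g') (ginv (gmul g' g)) = (0, psi g.1 g'.1 - psi g'.1 g.1).
  by apply: GM (GM _ _ Gg Gg') (GV _ (GM _ _ Gg' Gg)).
rewrite /gmul /ginv /=; congr pair; first by module_ring.
by rewrite ?(pDl, pDr, pNl, pNr, pZl, pZr); module_ring.
Qed.

Lemma lie_span_centerZ u v k : lie_span u v -> lie_span 0 (k *: v).
Proof.
move=> h; elim: h k => {u v}.
- by move=> k; rewrite scaler0; exact: lie_span0.
- by move=> u v u' v' _ IH _ IH' k; rewrite scalerDr -[0]addr0; apply: lie_spanD.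
- by move=> r u v _ IH k; rewrite scalerA; apply: IH.
- by move=> g Gg k; apply/lie_span_center/avg_centerZ/avg_center_gen.
- by move=> b Gb k; apply/lie_span_center/avg_centerZ.
Qed.

Lemma lie_span_commutator u v (g : A * B) : lie_span u v -> G g ->
  lie_span 0 (psi u g.1 - psi g.1 u).
Proof.
move=> h Gg; elim: h => {u v}.
- by rewrite p0l p0r subrr; exact: lie_span0.
- move=> u v u' v' _ IH _ IH'.
  rewrite (_ : _ - _ = (psi u g.1 - psi g.1 u) + (psi u' g.1 - psi g.1 u')).
    by rewrite -[0]addr0; apply: lie_spanD.
  by rewrite pDl pDr; module_ring.
- move=> r u v _ IH.
  rewrite (_ : _ - _ = r *: (psi u g.1 - psi g.1 u)).
    by rewrite -(scaler0 _ r); apply: lie_spanZ.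
  by rewrite pZl pZr; module_ring.
- by move=> g' Gg'; apply/lie_span_center/avg_commutator.
- by move=> b Gb; rewrite p0l p0r subrr; exact: lie_span0.
Qed.

Lemma lie_span_hat u v k : lie_span u v ->
  @hat Phi (rmod_of A) (rmod_of B) psi G (dual Phi) (dpoint 0 (k *: u) 0 (k *: v)).
Proof.
move=> h; elim: h k => {u v}.
- by move=> k; rewrite !scaler0; exact: (@hat_eps0 _ _ _ psi G).
- by move=> u v u' v' _ IH _ IH' k; rewrite !scalerDr; exact: (hat_epsD hpsi (IH k) (IH' k)).
- by move=> r u v _ IH k; rewrite !scalerA.
- by move=> g Gg k; exact: (hat_eps_gen hpsi k Gg).
- by move=> b Gb k; rewrite scaler0; exact: (@hat_eps_center _ _ _ psi G b k Gb).
Qed.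

Lemma lie_span_LieG u v : lie_span u v -> LieG psi G (dpoint 0 u 0 v).
Proof.
move=> h; split; first by have := lie_span_hat 1 h; rewrite !scale1r.
by rewrite /dpoint /=; congr pair; apply/tpush_eps0_eq0P; rewrite dual_tensK.
Qed.

Lemma LieG_lie_span x : LieG psi G x -> exists u v, lie_span u v /\ dcoord x = ((0, u), (0, v)).
Proof.
case=> hx /pair_equal_spec[/tpush_eps0_eq0P E1 /tpush_eps0_eq0P E2].
apply: (hat_dual_tangent hpsi hG (I := lie_span)) => //.
- exact: lie_span0.
- by move=> *; apply: lie_spanD.
- by move=> *; apply: lie_spanZ.
- by move=> u v g h Gg; exact: lie_span_commutator h Gg.
- by move=> u v k h; apply: lie_span_centerZ h.
- by move=> g Gg; apply: lie_span_gen.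
- by move=> b k Gb; apply/lie_span_center/avg_centerZ.
Qed.

End LieAlgebraOfG.

Section TensorMap.
Variables (Phi : comPzRingType) (V : rmod Phi) (U : Type) (iota : U -> V).
Variables (C : lmodType Phi) (K : comAlgType Phi) (f : U -> C).
Hypothesis fD : forall u u' u'', iota u'' = radd V (iota u) (iota u') -> f u'' = f u + f u'.
Hypothesis fZ : forall r u u', iota u' = rscale V r (iota u) -> f u' = r *: f u.
Local Notation tcU := (tcls iota (S := ralg_of K)).
Local Notation tcC := (tcls (@id (rmod_of C)) (S := ralg_of K)).

Definition tmap (z : tens iota (ralg_of K)) : tensK C K :=
  tcC [seq (f p.1, p.2) | p <- trep z].

Lemma tmap_tcls l : tmap (tcU l) = tcC [seq (f p.1, p.2) | p <- l].
Proof.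
apply: tcls_map_trep => M h /= hh; split.
- by move=> u u' u'' s /fD ->; apply: tbilinDl.
- by move=> r u u' s /fZ ->; apply: tbilinZl.
- by move=> u s s'; apply: tbilinDr.
- by move=> r u s; apply: tbilinZr.
Qed.

Lemma tmapD z z' : tmap (tadd z z') = tmap z + tmap z'.
Proof.
case: (tclsP z) => l ->; case: (tclsP z') => l' ->.
by rewrite tadd_tcls !tmap_tcls map_cat /GRing.add /= tadd_tcls.
Qed.

Lemma tmapZ (k : K) z : tmap (tscaleS (S := ralg_of K) k z) = k *: tmap z.
Proof.
case: (tclsP z) => l ->.
by rewrite tscaleS_tcls !tmap_tcls /GRing.scale /= tscaleS_tcls -!map_comp.
Qed.

End TensorMap.

Section BaseChange.
Variables (Phi : comPzRingType) (A B : lmodType Phi) (psi : A -> A -> B) (G : A * B -> Prop).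
Variable K : comAlgType Phi.
Hypothesis hpsi : bilinear_map psi.
Hypothesis hG : almost_vector_group (V := rmod_of A) (W := rmod_of B) psi G.
Local Notation AK := (tensK A K).
Local Notation BK := (tensK B K).
Local Notation psK := (@psiK Phi A B psi K).
Let hpsiK : bilinear_map psK := psiK_bilinear K hpsi.
Let q0r := psi0r hpsiK. Let q0l := psi0l hpsiK. Let qDr := psiDr hpsiK. Let qDl := psiDl hpsiK.
Let qZr := psiZr hpsiK. Let qZl := psiZl hpsiK. Let qNr := psiNr hpsiK. Let qNl := psiNl hpsiK.

Definition hatK : AK * BK -> Prop := @hat Phi (rmod_of A) (rmod_of B) psi G (ralg_of K).
Local Notation hatKD := (@hat K (rmod_of AK) (rmod_of BK) psK hatK (dual K)).

Lemma hatK_avg : almost_vector_group (V := rmod_of AK) (W := rmod_of BK) psK hatK.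
Proof. exact: (@hat_avg Phi (rmod_of A) (rmod_of B) psi G (ralg_of K)). Qed.

Lemma hatK_gen (g : A * B) : G g -> hatK (tpure g.1 1, tpure g.2 1).
Proof. exact: (@hat_gen Phi (rmod_of A) (rmod_of B) psi G (ralg_of K) g). Qed.

Lemma lie_span_hatK u v : lie_span psi G u v ->
  forall k, hatKD (dpoint 0 (tpure u k) 0 (tpure v k)).
Proof.
elim => {u v} [k|u v u' v' _ IH _ IH' k|r u v _ IH k|g Gg k|b Gb k].
- by rewrite !tpure0l; exact: (@hat_eps0 _ _ _ psK hatK).
- by rewrite !tpureDl; exact: (hat_epsD hpsiK (IH k) (IH' k)).
- by rewrite !tpureZl.
- have := hat_eps_gen hpsiK k (hatK_gen Gg).
  by rewrite /= (psiK_tpure hpsi) mul1r -tpureNl -!tpureDl !scale_tpure mulr1.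
- have := hatK_gen Gb; rewrite /= tpure0l => /(@hat_eps_center _ _ _ psK hatK _ k).
  by rewrite tpure0l scale_tpure mulr1.
Qed.

Local Notation LieGset := {x | LieG psi G x}.
Local Notation iotaL := ((fun x : LieGset => proj1_sig x) :
  LieGset -> lie_rmod (rmod_of A) (rmod_of B)).

Definition lie_tangentA (x : LieGset) : A := (dual_coord (proj1_sig x).1).2.
Definition lie_tangentB (x : LieGset) : B := (dual_coord (proj1_sig x).2).2.

Lemma lie_tangent_span x : lie_span psi G (lie_tangentA x) (lie_tangentB x).
Proof.
have [u [v [h]]] := LieG_lie_span hpsi hG (proj2_sig x).
by rewrite /lie_tangentA /lie_tangentB /dcoord => -[-> ->].
Qed.

Local Notation radd_lie := (radd (lie_rmod (rmod_of A) (rmod_of B))).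
Local Notation rscale_lie := (rscale (lie_rmod (rmod_of A) (rmod_of B))).

Lemma lie_tangentAD x x' x'' : iotaL x'' = radd_lie (iotaL x) (iotaL x') ->
  lie_tangentA x'' = lie_tangentA x + lie_tangentA x'.
Proof. by move=> E; rewrite /lie_tangentA E /= dual_coordD. Qed.

Lemma lie_tangentAZ r x x' : iotaL x' = rscale_lie r (iotaL x) ->
  lie_tangentA x' = r *: lie_tangentA x.
Proof. by move=> E; rewrite /lie_tangentA E /= dual_coordZR. Qed.

Lemma lie_tangentBD x x' x'' : iotaL x'' = radd_lie (iotaL x) (iotaL x') ->
  lie_tangentB x'' = lie_tangentB x + lie_tangentB x'.
Proof. by move=> E; rewrite /lie_tangentB E /= dual_coordD. Qed.

Lemma lie_tangentBZ r x x' : iotaL x' = rscale_lie r (iotaL x) ->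
  lie_tangentB x' = r *: lie_tangentB x.
Proof. by move=> E; rewrite /lie_tangentB E /= dual_coordZR. Qed.

Definition lie_mapA : LieG_tensor psi G K -> AK := @tmap Phi _ _ iotaL A K lie_tangentA.
Definition lie_mapB : LieG_tensor psi G K -> BK := @tmap Phi _ _ iotaL B K lie_tangentB.

Definition lie_image (X : AK) (Y : BK) := exists z, lie_mapA z = X /\ lie_mapB z = Y.

Let lie_mapA_tcls := tmap_tcls (K := K) lie_tangentAD lie_tangentAZ.
Let lie_mapB_tcls := tmap_tcls (K := K) lie_tangentBD lie_tangentBZ.
Let lie_mapAD := tmapD (K := K) lie_tangentAD lie_tangentAZ.
Let lie_mapBD := tmapD (K := K) lie_tangentBD lie_tangentBZ.
Let lie_mapAZ := tmapZ (K := K) lie_tangentAD lie_tangentAZ.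
Let lie_mapBZ := tmapZ (K := K) lie_tangentBD lie_tangentBZ.

Lemma lie_image0 : lie_image 0 0.
Proof.
by exists (tzero iotaL (ralg_of K)); rewrite /lie_mapA /lie_mapB lie_mapA_tcls lie_mapB_tcls.
Qed.

Lemma lie_imageD X Y X' Y' : lie_image X Y -> lie_image X' Y' -> lie_image (X + X') (Y + Y').
Proof.
case=> z [<- <-] [z' [<- <-]]; exists (tadd z z').
by rewrite /lie_mapA /lie_mapB lie_mapAD lie_mapBD.
Qed.

Lemma lie_imageZ (k : K) X Y : lie_image X Y -> lie_image (k *: X) (k *: Y).
Proof.
case=> z [<- <-]; exists (tscaleS (S := ralg_of K) k z).
by rewrite /lie_mapA /lie_mapB lie_mapAZ lie_mapBZ.
Qed.

Lemma lie_image_eq X Y Y' : lie_image X Y -> Y = Y' -> lie_image X Y'.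
Proof. by move=> h <-. Qed.

Lemma lie_image_span u v k : lie_span psi G u v -> lie_image (tpure u k) (tpure v k).
Proof.
move=> h; pose x : LieGset := exist _ (dpoint 0 u 0 v) (lie_span_LieG hpsi h).
exists (tcls iotaL [:: (x, (k : ralg_of K))]).
rewrite /lie_mapA /lie_mapB lie_mapA_tcls lie_mapB_tcls /=.
by rewrite /lie_tangentA /lie_tangentB /= !dual_tensK.
Qed.

Inductive lie_spanK : AK -> BK -> Prop :=
  | lie_spanK0 : lie_spanK 0 0
  | lie_spanKD X Y X' Y' : lie_spanK X Y -> lie_spanK X' Y' -> lie_spanK (X + X') (Y + Y')
  | lie_spanKZ (k : K) X Y : lie_spanK X Y -> lie_spanK (k *: X) (k *: Y)
  | lie_spanK_pure u v k : lie_span psi G u v -> lie_spanK (tpure u k) (tpure v k).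

Inductive gen_spanK : AK -> Prop :=
  | gen_spanK0 : gen_spanK 0
  | gen_spanKD X X' : gen_spanK X -> gen_spanK X' -> gen_spanK (X + X')
  | gen_spanKZ (k : K) X : gen_spanK X -> gen_spanK (k *: X)
  | gen_spanK_pure (g : A * B) k : G g -> gen_spanK (tpure g.1 k).

Lemma lie_image_spanK X Y : lie_image X Y -> lie_spanK X Y.
Proof.
case=> z [<- <-]; rewrite /lie_mapA /lie_mapB /tmap.
elim: (trep z) => [|p l IH] /=; first exact: lie_spanK0.
by rewrite !tcls_cons; apply: lie_spanKD => //; apply/lie_spanK_pure/lie_tangent_span.
Qed.

Lemma lie_spanK_centerZ X Y : lie_spanK X Y -> forall k, lie_image 0 (k *: Y).
Proof.
elim => {X Y} [k|X Y X' Y' _ IH _ IH' k|c X Y _ IH k|u v k0 h k].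
- by rewrite scaler0; apply: lie_image0.
- by rewrite scalerDr -[0]addr0; apply: lie_imageD.
- by rewrite scalerA; apply: IH.
- rewrite scale_tpure -(tpure0l A (k * k0)).
  by apply: lie_image_span; have := lie_span_centerZ hpsi hG 1 h; rewrite scale1r.
Qed.

Lemma gen_spanK_lie_spanK X : gen_spanK X -> exists Y, lie_spanK X Y.
Proof.
elim => {X} [|X X' _ [Y hY] _ [Y' hY']|k X _ [Y hY]|g k Gg].
- by exists 0; apply: lie_spanK0.
- by exists (Y + Y'); apply: lie_spanKD.
- by exists (k *: Y); apply: lie_spanKZ.
- by exists (tpure (g.2 + g.2 - psi g.1 g.1) k); apply/lie_spanK_pure/lie_span_gen.
Qed.

Lemma lie_spanK_commutator X Y Z : lie_spanK X Y -> gen_spanK Z ->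
  forall k, lie_image 0 (k *: (psK X Z - psK Z X)).
Proof.
move=> hX hZ; elim: hX => {X Y} [k|X Y X' Y' _ IH _ IH' k|c X Y _ IH k|u v k1 hS].
- by rewrite q0l q0r subrr scaler0; apply: lie_image0.
- have := lie_imageD (IH k) (IH' k); rewrite addr0 => /lie_image_eq; apply.
  by rewrite qDl qDr; module_ring.
- apply: lie_image_eq (IH (k * c)) _.
  by rewrite qZl qZr; module_ring.
elim: hZ => {Z} [k|Z Z' _ IH _ IH' k|c Z _ IH k|g k2 Gg k].
- by rewrite q0l q0r subrr scaler0; apply: lie_image0.
- have := lie_imageD (IH k) (IH' k); rewrite addr0 => /lie_image_eq; apply.
  by rewrite qDl qDr; module_ring.
- apply: lie_image_eq (IH (k * c)) _.
  by rewrite qZl qZr; module_ring.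
- have := lie_image_span (k * (k1 * k2)) (lie_span_commutator hpsi hG hS Gg).
  rewrite tpure0l => /lie_image_eq; apply.
  by rewrite !(psiK_tpure hpsi) tpureDl tpureNl scalerBr !scale_tpure (mulrC k2 k1).
Qed.

Lemma hatK_lie_image x : hatK x ->
  gen_spanK x.1 /\ forall k, lie_image x.1 (k *: (x.2 + x.2 - psK x.1 x.1)).
Proof.
move: x; apply: (@hat_ind Phi (rmod_of A) (rmod_of B) psi G (ralg_of K)).
  move=> g Gg; split; first exact: (gen_spanK_pure 1 Gg).
  move=> k /=; have Sg := lie_span_gen psi Gg.
  have := lie_imageD (lie_image_span 1 Sg) (lie_image_span (k - 1) (lie_span_centerZ hpsi hG 1 Sg)).
  rewrite tpure0l addr0 scale1r -tpureDr [1 + _]addrC subrK => /lie_image_eq; apply.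
  by rewrite (psiK_tpure hpsi) mul1r -tpureNl -!tpureDl scale_tpure mulr1.
split; [split|..].
- split; first exact: gen_spanK0.
  by move=> k; rewrite /= q0l addr0 subrr scaler0; apply: lie_image0.
- move=> x y [Sx Ix] [Sy Iy]; split; first exact: gen_spanKD.
  move=> k; have [Y hY] := gen_spanK_lie_spanK Sx.
  have := lie_imageD (lie_imageD (Ix k) (Iy k)) (lie_spanK_commutator hY Sy k).
  rewrite addr0 => /lie_image_eq; apply.
  by rewrite /= ?(qDl, qDr); module_ring.
- move=> x [Sx Ix]; split; first by have := gen_spanKZ (-1) Sx; rewrite scaleN1r.
  move=> k; have := lie_imageZ (-1) (Ix k); rewrite scaleN1r => /lie_image_eq; apply.
  by rewrite /= ?(qNl, qNr, qDl, qDr); module_ring.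
- move=> l x [Sx Ix]; split; first exact: gen_spanKZ.
  move=> k; apply: lie_image_eq (lie_imageZ l (Ix (k * l))) _.
  by rewrite /= ?(qZl, qZr); module_ring.
- move=> l b [Sx Ix]; split; first exact: gen_spanK0.
  move=> k; apply: lie_image_eq (Ix (k * l)) _.
  by rewrite /= ?(q0l, q0r); module_ring.
Qed.

(* If 2 is invertible, [x.2 = 1/2 (x.2 + x.2 - psi 0 0)]; otherwise the vector
   group hypothesis writes [x.2] as a sum of [b_i (x) k_i] with [(0, b_i)] in [G]. *)
Lemma lie_image_center (hV : vector_group psi G) x k : hatK x -> x.1 = 0 ->
  lie_image 0 (k *: x.2).
Proof.
move=> hx x10; have [[h h2]|no_half] := lem (exists h : Phi, h * 2 = 1).
  have := (hatK_lie_image hx).2 (k * (h *: 1)); rewrite x10 q0l subr0 => /lie_image_eq; apply.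
  have hh : h + h = 1 by rewrite -h2 mulr_natr mulr2n.
  by rewrite -scalerA scalerDr -!scalerDl hh !scale1r.
case: x hx x10 => x1 x2 /= hx x10; rewrite {}x10 in hx.
have [l [Gl ->]] := hV.2 no_half K x2 hx.
elim: l Gl => [|p l IH] Gl; first by rewrite scaler0; apply: lie_image0.
rewrite tcls_cons scalerDr scale_tpure -[0]addr0; apply: lie_imageD.
  rewrite -(tpure0l A (k * p.2)); apply/lie_image_span/lie_span_center.
  by apply: Gl; left.
by apply: IH => q lq; apply: Gl; right.
Qed.

Definition lie_tensor_map (z : LieG_tensor psi G K) : LieGK_rmod A B K :=
  dpoint 0 (lie_mapA z) 0 (lie_mapB z).

Lemma lie_tensor_mapD x y : lie_tensor_map (tadd x y) =
  radd (LieGK_rmod A B K) (lie_tensor_map x) (lie_tensor_map y).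
Proof.
rewrite /lie_tensor_map /lie_mapA /lie_mapB lie_mapAD lie_mapBD /=; congr pair.
  by apply: (@dual_coord_inj K AK); rewrite dual_coordD !dual_tensK; congr pair; rewrite /= addr0.
by apply: (@dual_coord_inj K BK); rewrite dual_coordD !dual_tensK; congr pair; rewrite /= addr0.
Qed.

Lemma lie_tensor_mapZ (k : K) x : lie_tensor_map (tscaleS (S := ralg_of K) k x) =
  rscale (LieGK_rmod A B K) k (lie_tensor_map x).
Proof.
rewrite /lie_tensor_map /lie_mapA /lie_mapB lie_mapAZ lie_mapBZ /=; congr pair.
  apply: (@dual_coord_inj K AK).
  by rewrite dual_coordZR !dual_tensK; congr pair; rewrite /= scaler0.
apply: (@dual_coord_inj K BK).
by rewrite dual_coordZR !dual_tensK; congr pair; rewrite /= scaler0.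
Qed.

Lemma lie_tensor_map_Lie z : LieGK psi G K (lie_tensor_map z).
Proof.
split.
  rewrite /lie_tensor_map /lie_mapA /lie_mapB /tmap; elim: (trep z) => [|p l IH] /=.
    exact: (@hat_eps0 _ _ _ psK hatK).
  rewrite !tcls_cons; apply: (hat_epsD hpsiK _ IH).
  exact: lie_span_hatK (lie_tangent_span p.1) p.2.
rewrite /lie_tensor_map /=; congr pair.
  by apply/(@tpush_eps0_eq0P K AK); rewrite dual_tensK.
by apply/(@tpush_eps0_eq0P K BK); rewrite dual_tensK.
Qed.

Lemma lie_tensor_map_onto (hV : vector_group psi G) y :
  LieGK psi G K y -> exists z, lie_tensor_map z = y.
Proof.
case=> hy /pair_equal_spec[/(@tpush_eps0_eq0P K AK) E1 /(@tpush_eps0_eq0P K BK) E2].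
have [X [Y [XY Ey]]] : exists X Y, lie_image X Y /\ @dcoord K AK BK y = ((0, X), (0, Y)).
  apply: (hat_dual_tangent hpsiK hatK_avg (I := lie_image)) => //.
  - exact: lie_image0.
  - by move=> *; apply: lie_imageD.
  - by move=> *; apply: lie_imageZ.
  - move=> u v g /lie_image_spanK h /hatK_lie_image[Sg _].
    by have := lie_spanK_commutator h Sg 1; rewrite scale1r.
  - by move=> u v k /lie_image_spanK h; apply: lie_spanK_centerZ h k.
  - by move=> g /hatK_lie_image[_ /(_ 1)]; rewrite scale1r.
  - by move=> b k Gb; exact: (lie_image_center hV k Gb erefl).
case: XY => z [EX EY]; exists z.
by apply: (@dcoord_inj K AK BK); rewrite Ey /lie_tensor_map EX EY dcoord_point.
Qed.

End BaseChange.

Unset Implicit Arguments. Set Strict Implicit.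

Theorem lemma1p13 (Phi : comPzRingType) (A B : lmodType Phi) (psi : A -> A -> B)
  (G : A * B -> Prop) (K : comAlgType Phi) :
  bilinear_map psi -> vector_group psi G ->
  exists h : LieG_tensor psi G K -> LieGK_rmod A B K,
    [/\ (forall x y, h (tadd x y) = radd (LieGK_rmod A B K) (h x) (h y)),
        (forall (k : K) x,
           h (@tscaleS Phi _ _ _ (ralg_of K) k x) = rscale (LieGK_rmod A B K) k (h x)),
        (forall x, LieGK psi G K (h x)) &
        (forall y, LieGK psi G K y -> exists x, h x = y)].
Proof.
move=> hpsi hV; have hG := hV.1.
exists (@lie_tensor_map Phi A B psi G K); split.
- exact: lie_tensor_mapD.
- exact: lie_tensor_mapZ.
- exact: lie_tensor_map_Lie.
- exact: lie_tensor_map_onto.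
Qed.
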